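(* Let $a,b\in\mathbb C$ and let $x$ be an indeterminate. For integers $0\le p\le k$, set $g_i=P^k_{p+i}(x;a,b)$ for $i=0,\dots,k-p$. Then $$\sum_{i=0}^{k-p}(-1)^{k-p-i}\binom{k-p}{i}g_i=\prod_{i=0}^{p-1}(x+b-i)\prod_{i=0}^{k-p-1}(b-a-p-i).$$
   Context: For integers $0\le i\le k$, $P_i^k(x;a,b):=\prod_{j=0}^{k-i-1}(x+j+a)\prod_{j=0}^{i-1}(x-j+b)$ (empty products equal $1$). *)

From HB Require Import structures.
From mathcomp Require Import all_boot all_order all_algebra.
Set Implicit Arguments. Unset Strict Implicit. Unset Printing Implicit Defensive.
Import Order.TTheory GRing.Theory Num.Theory.
Local Open Scope ring_scope.

Definition Pki (R : nzRingType) (k i : nat) (a b : R) : {poly R} :=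
  (\prod_(j < k - i) ('X + (j%:R + a)%:P)) *
  (\prod_(j < i) ('X + (b - j%:R)%:P)).

(** Writing [y^(n)] for the falling factorial [y (y - 1) ... (y - n + 1)],
    one has [P_i^k(x;a,b) = (-1)^(k-i) (-(x+a))^(k-i) (x+b)^(i)] and
    [(x+b)^(p+i) = (x+b)^(p) (x+b-p)^(i)].  After factoring out [(x+b)^(p)]
    the alternating sum is the Chu-Vandermonde expansion of
    [(-(x+a) + (x+b-p))^(k-p) = (b-a-p)^(k-p)]. *)
From HB Require Import structures.
From mathcomp Require Import all_boot all_order all_algebra.
Import Order.TTheory GRing.Theory Num.Theory.
From mathcomp Require Import ring.
Set Implicit Arguments. Unset Strict Implicit.
Local Open Scope ring_scope.

Section FallingFactorial.

Variable R : comPzRingType.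
Implicit Types y z : R.

Definition ffactr y n : R := \prod_(j < n) (y - j%:R).

Lemma ffactr0 y : ffactr y 0 = 1.
Proof. by rewrite /ffactr big_ord0. Qed.

Lemma ffactrS y n : ffactr y n.+1 = ffactr y n * (y - n%:R).
Proof. by rewrite /ffactr big_ord_recr. Qed.

Lemma ffactrD y m n : ffactr y (m + n) = ffactr y m * ffactr (y - m%:R) n.
Proof.
rewrite /ffactr big_split_ord /=; congr (_ * _); apply: eq_bigr => j _.
by rewrite natrD opprD addrA.
Qed.

Lemma ffactrN y n : ffactr (- y) n = (-1) ^+ n * \prod_(j < n) (y + j%:R).
Proof.
rewrite /ffactr -[in (-1) ^+ n](card_ord n) -prodrN.
by apply: eq_bigr => j _; rewrite opprD.
Qed.

Lemma ffactr_vandermonde y z m :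
  ffactr (y + z) m = \sum_(i < m.+1) 'C(m, i)%:R * ffactr y (m - i) * ffactr z i.
Proof.
elim: m => [|m IH].
  by rewrite big_ord_recl big_ord0 !ffactr0 /= addr0 mulr1 mul1r.
pose A i := 'C(m, i)%:R * ffactr y (m.+1 - i) * ffactr z i.
pose B i := 'C(m, i)%:R * ffactr y (m - i) * ffactr z i.+1.
have pascal : \sum_(i < m.+2) 'C(m.+1, i)%:R * ffactr y (m.+1 - i) * ffactr z i
    = \sum_(i < m.+2) A i + \sum_(i < m.+1) B i.
  rewrite big_ord_recl [in RHS]big_ord_recl /A /B /= -addrA.
  congr (_ + _); first by rewrite !bin0.
  rewrite addrC -big_split /=; apply: eq_bigr => i _.
  by rewrite /bump /= binS natrD !mulrDl addrC subSS.
have A_last : \sum_(i < m.+2) A i = \sum_(i < m.+1) A i.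
  by rewrite big_ord_recr /A /= bin_small // !mul0r addr0.
rewrite pascal A_last -big_split /= ffactrS IH mulr_suml; apply: eq_bigr => i _.
have le_im : (i <= m)%N by rewrite -ltnS.
rewrite /A /B subSn // !ffactrS.
(* the new factor [y + z - m] splits between the two falling factorials *)
have -> : y + z - m%:R = (y - (m - i)%:R) + (z - i%:R) by rewrite natrB //; ring.
by ring.
Qed.

End FallingFactorial.

Lemma polyC_ffactr (R : comNzRingType) (c : R) n :
  (ffactr c n)%:P = ffactr c%:P n.
Proof.
by rewrite rmorph_prod; apply: eq_bigr => j _; rewrite rmorphB rmorph_nat.
Qed.

Lemma prod_XaddC_ffactr (R : comNzRingType) (b : R) n :
  \prod_(j < n) ('X + (b - j%:R)%:P) = ffactr ('X + b%:P) n.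
Proof. by apply: eq_bigr => j _; rewrite polyCB polyC_natr addrA. Qed.

Lemma Pki_ffactr (R : comNzRingType) (k i : nat) (a b : R) :
  Pki k i a b =
  (-1) ^+ (k - i) * ffactr (- ('X + a%:P)) (k - i) * ffactr ('X + b%:P) i.
Proof.
rewrite /Pki ffactrN signrMK prod_XaddC_ffactr; congr (_ * _).
by apply: eq_bigr => j _; rewrite polyCD polyC_natr [j%:R + _]addrC addrA.
Qed.

Theorem proposition4 (C : numClosedFieldType) (a b : C) (k p : nat) :
  (p <= k)%N ->
  \sum_(i < (k - p).+1)
     ((-1) ^+ (k - p - i) * ('C(k - p, i))%:R) *: Pki k (p + i) a b
  = (\prod_(i < p) ('X + (b - i%:R)%:P)) *
    (\prod_(i < k - p) (b - a - p%:R - i%:R))%:P.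
Proof.
move=> le_pk; set m := (k - p)%N.
have -> : (\prod_(i < m) (b - a - p%:R - i%:R))%:P
          = ffactr (- ('X + a%:P) + ('X + (b - p%:R)%:P)) m.
  rewrite (polyC_ffactr (b - a - p%:R)); congr ffactr.
  by rewrite !rmorphB rmorph_nat; ring.
rewrite prod_XaddC_ffactr (ffactr_vandermonde (- ('X + a%:P))) mulr_sumr.
apply: eq_bigr => i _.
rewrite Pki_ffactr ffactrD polyCB polyC_natr addrA -/m.
have -> : (k - (p + i) = m - i)%N by rewrite subnDA.
rewrite -mul_polyC rmorphM rmorphXn rmorphN rmorph1 rmorph_nat.
by rewrite -!mulrA mulrCA signrMK; ring.
Qed.
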